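(* Assume (C1) the maximum likelihood estimator $\widehat{\theta}$ exists and is an interior point of $\Theta$, and (C2) the log-likelihood $\ell$ is strictly concave on $\Theta$. Let $\Theta_0\subseteq\Theta$ be nonempty and assume $F$ is continuous and strictly increasing. Then $$s(\Theta_0)=\sup_{\theta\in\Theta_0}\bigl(1-F(T_\theta)\bigr)=1-F(T_{\Theta_0}),$$ where $T_{\Theta_0}=2\bigl(\ell(\widehat{\theta})-\ell(\widehat{\theta}_0)\bigr)$ with $\widehat{\theta}_0=\arg\sup_{\theta\in\Theta_0}\ell(\theta)$ (i.e. $T_{\Theta_0}=2(\ell(\widehat{\theta})-\sup_{\theta\in\Theta_0}\ell(\theta))$).
   Context: Let $\Theta\subseteq\mathbb{R}^k$ be a parameter space of a parametric statistical model, $x$ the observed data, and $\ell(\theta)=\ell(\theta;x)$ the log-likelihood. Let $\widehat{\theta}=\arg\sup_{\theta\in\Theta}\ell(\theta)$ be the maximum likelihood estimator, and for $\theta\in\Theta$ put $T_\theta=2(\ell(\widehat{\theta})-\ell(\theta))\ge 0$. Let $F$ be a cumulative distribution function of a nonnegative random variable (in the paper, the (approximate) distribution of $T_{\theta_0}$ at the true parameter $\theta_0$, assumed not to depend on $\theta_0$). For $\alpha\in(0,1)$, let $F_\alpha$ be the $1-\alpha$ quantile of $F$, i.e. $F(F_\alpha)=1-\alpha$. The likelihood-based confidence region of level $\alpha$ is $\Lambda_\alpha=\{\theta\in\Theta: T_\theta\le F_\alpha\}$. For $\Theta_0\subseteq\Theta$, the $s$-value (evidence measure for $H_0:\theta\in\Theta_0$)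 is $$s(\Theta_0)=\max\{0,\ \sup\{\alpha\in(0,1):\ \Lambda_\alpha\cap\Theta_0\neq\varnothing\}\},$$ with the convention that the supremum of the empty set does not exceed $0$. *)

From Stdlib Require Import Reals Lra ClassicalEpsilon.
From Stdlib Require Vectors.Fin.
Open Scope R_scope.

Definition Rk (k : nat) : Type := Fin.t k -> R.

Definition set_Rk (k : nat) : Type := Rk k -> Prop.

(** Supremum of a set of reals (meaningful when a least upper bound exists,
    e.g. for nonempty sets bounded above; arbitrary otherwise). *)
Definition Rsup (E : R -> Prop) : R :=
  epsilon (inhabits 0) (fun s => is_lub E s).

(** x is an interior point of Theta (box neighbourhoods; same topology as
    the Euclidean one). *)
Definition interior_point {k : nat} (Theta : set_Rk k) (x : Rk k) : Prop :=
  exists eps, 0 < eps /\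
    forall y : Rk k, (forall i, Rabs (y i - x i) < eps) -> Theta y.

Definition strictly_concave_on {k : nat} (Theta : set_Rk k) (f : Rk k -> R)
  : Prop :=
  (forall x y t, Theta x -> Theta y -> 0 <= t <= 1 ->
     Theta (fun i => t * x i + (1 - t) * y i)) /\
  (forall x y t, Theta x -> Theta y -> x <> y -> 0 < t < 1 ->
     f (fun i => t * x i + (1 - t) * y i) > t * f x + (1 - t) * f y).

Definition is_cdf_nonneg (F : R -> R) : Prop :=
  (forall x y, x <= y -> F x <= F y) /\
  (forall x, x < 0 -> F x = 0) /\
  (forall x eps, 0 < eps -> exists d, 0 < d /\
      forall y, x <= y < x + d -> Rabs (F y - F x) < eps) /\
  (forall eps, 0 < eps -> exists M, forall x, M <= x -> Rabs (F x - 1) < eps).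

Definition strictly_increasing_on_support (F : R -> R) : Prop :=
  forall x y, 0 <= x -> x < y -> F x < F y.

Definition Tstat {k : nat} (l : Rk k -> R) (thetahat theta : Rk k) : R :=
  2 * (l thetahat - l theta).

(** The (1 - alpha)-quantile F_alpha is a value q with F q = 1 - alpha.
    Confidence region Lambda_alpha = {theta in Theta : T_theta <= F_alpha}. *)
Definition Lambda {k : nat} (F : R -> R) (Theta : set_Rk k) (l : Rk k -> R)
  (thetahat : Rk k) (alpha : R) : set_Rk k :=
  fun theta => Theta theta /\
    exists q, F q = 1 - alpha /\ Tstat l thetahat theta <= q.

Definition svalue_set {k : nat} (F : R -> R) (Theta : set_Rk k) (l : Rk k -> R)
  (thetahat : Rk k) (Theta0 : set_Rk k) : R -> Prop :=
  fun alpha => 0 < alpha < 1 /\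
    exists theta, Lambda F Theta l thetahat alpha theta /\ Theta0 theta.

(** s(Theta0) = max{0, sup{alpha in (0,1) : Lambda_alpha cap Theta0 <> empty}},
    with the sup of the empty set taken to be (at most) 0. *)
Definition svalue {k : nat} (F : R -> R) (Theta : set_Rk k) (l : Rk k -> R)
  (thetahat : Rk k) (Theta0 : set_Rk k) : R :=
  let A := svalue_set F Theta l thetahat Theta0 in
  match excluded_middle_informative (exists a, A a) with
  | left _ => Rmax 0 (Rsup A)
  | right _ => 0
  end.

Definition Tstat_set {k : nat} (l : Rk k -> R) (thetahat : Rk k)
  (Theta0 : set_Rk k) : R :=
  2 * (l thetahat - Rsup (fun v => exists theta, Theta0 theta /\ v = l theta)).

(** Write [T0 = 2 (l(thetahat) - sup_{Theta0} l)].  Since [T_theta] is an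
    affine, decreasing function of [l theta], the infimum of [T_theta] over
    [Theta0] is [T0] and it is approached by a sequence of parameters.  The
    argument has three parts:
    - [sup_antitone_image]: for a nondecreasing, right-continuous [F], the
      supremum of [1 - F(t)] over a set of reals with infimum [m] is
      [1 - F m]; applied to the values [T_theta] this is the second equality.
    - [svalue_set_iff]: when [F] is continuous and strictly increasing, the
      level [alpha] lies in the s-value set exactly when [alpha <= 1 - F(T_theta)]
      for some [theta] in [Theta0] (every level in (0,1) has a quantile).
    - [lub_downward_closure]: the levels in (0,1) lying below some element of
      a set of numbers in (0,1] have the same supremum as that set; hence the
      s-value set has supremum [1 - F T0], which is positive, so the outer
      [max 0] is harmless and the first equality follows. *)

From Stdlib Require Import Reals Lra ClassicalEpsilon Classical.
Open Scope R_scope.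

Lemma Rsup_eq (E : R -> Prop) (s : R) : is_lub E s -> Rsup E = s.
Proof.
  intro Hs. unfold Rsup.
  apply (is_lub_u E); [|exact Hs].
  apply (epsilon_spec (inhabits 0) (fun s => is_lub E s)). now exists s.
Qed.

Lemma lub_approx (E : R -> Prop) (S eps : R) :
  is_lub E S -> 0 < eps -> exists v, E v /\ S - eps < v.
Proof.
  intros HS Heps. apply NNPP. intro Hnone.
  assert (S <= S - eps); [|lra].
  apply HS. intros v Hv. apply Rnot_lt_le. intro Hlt. apply Hnone. now exists v.
Qed.

Section Cdf.

Variable F : R -> R.
Hypothesis HF : is_cdf_nonneg F.

Lemma cdf_le_1 (x : R) : F x <= 1.
Proof.
  destruct HF as [Hmono [_ [_ Hlim]]].
  destruct (Rle_dec (F x) 1) as [Hle|Hgt]; [exact Hle|]. exfalso.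
  destruct (Hlim (F x - 1)) as [M HM]; [lra|].
  specialize (HM (Rmax M x) (Rmax_l _ _)). apply Rabs_def2 in HM.
  pose proof (Hmono x (Rmax M x) (Rmax_r _ _)). lra.
Qed.

Lemma cdf_ge_0 (x : R) : 0 <= F x.
Proof.
  destruct HF as [Hmono [Hneg _]].
  destruct (Rle_dec 0 x) as [Hx|Hx].
  - rewrite <- (Hneg (-1)) by lra. apply Hmono. lra.
  - rewrite (Hneg x) by lra. lra.
Qed.

Lemma cdf_tail_range (t : R) :
  strictly_increasing_on_support F -> 0 <= t -> 0 < 1 - F t <= 1.
Proof.
  intros Hinc Ht.
  pose proof (Hinc t (t + 1) Ht ltac:(lra)).
  pose proof (cdf_le_1 (t + 1)). pose proof (cdf_ge_0 t). lra.
Qed.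

Lemma cdf_quantile_exists (c : R) :
  continuity F -> 0 < c < 1 -> exists q, F q = c.
Proof.
  intros Hcont Hc. destruct HF as [_ [Hneg [_ Hlim]]].
  destruct (Hlim (1 - c)) as [M HM]; [lra|].
  specialize (HM (Rmax M 0) (Rmax_l _ _)). apply Rabs_def2 in HM.
  pose proof (Rmax_r M 0).
  destruct (IVT (fun x => F x - c) (-1) (Rmax M 0)) as [q [_ Hq]];
    simpl; try lra.
  - apply continuity_minus; [exact Hcont|].
    apply continuity_const. now intros ? ?.
  - rewrite (Hneg (-1)) by lra. lra.
  - exists q. lra.
Qed.

(** If [t] ranges over a set (indexed by [P]) whose infimum is [m], then
    [1 - F t] ranges over a set whose supremum is [1 - F m]: monotonicity
    gives the bound and right-continuity at [m] gives its optimality. *)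
Lemma sup_antitone_image {X : Type} (P : X -> Prop) (t : X -> R) (m : R) :
  (forall x, P x -> m <= t x) ->
  (forall eps, 0 < eps -> exists x, P x /\ t x < m + eps) ->
  is_lub (fun v => exists x, P x /\ v = 1 - F (t x)) (1 - F m).
Proof.
  destruct HF as [Hmono [_ [Hright _]]].
  intros Hlow Happrox. split.
  - intros v [x [Hx ->]]. pose proof (Hmono _ _ (Hlow x Hx)). lra.
  - intros u Hu. destruct (Rle_dec (1 - F m) u) as [Hle|Hgt]; [exact Hle|].
    exfalso.
    destruct (Hright m (1 - F m - u)) as [d [Hd Hclose]]; [lra|].
    destruct (Happrox d Hd) as [x [Hx Htx]].
    assert (Hnear : m <= t x < m + d) by (split; [apply Hlow|]; assumption).
    specialize (Hclose _ Hnear). apply Rabs_def2 in Hclose.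
    assert (1 - F (t x) <= u) by (apply Hu; now exists x). lra.
Qed.

(** The converse uses a
    quantile [q] of level [1 - alpha], which is nonnegative because [F]
    vanishes on the negative reals, and strict increase of [F] from [q]. *)
Lemma svalue_set_iff {k : nat} (Theta Theta0 : set_Rk k) (l : Rk k -> R)
    (thetahat : Rk k) :
  continuity F -> strictly_increasing_on_support F ->
  (forall theta, Theta0 theta -> Theta theta) ->
  forall alpha, svalue_set F Theta l thetahat Theta0 alpha <->
  0 < alpha < 1 /\
  exists theta, Theta0 theta /\ alpha <= 1 - F (Tstat l thetahat theta).
Proof.
  intros Hcont Hinc Hsub alpha. pose proof HF as [Hmono [Hneg _]].
  split.
  - intros [Halpha [theta [[_ [q [Hq HTq]]] Htheta]]].
    split; [exact Halpha|]. exists theta. split; [exact Htheta|].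
    pose proof (Hmono _ _ HTq). lra.
  - intros [Halpha [theta [Htheta Hle]]].
    split; [exact Halpha|]. exists theta. split; [|exact Htheta].
    split; [now apply Hsub|].
    destruct (cdf_quantile_exists (1 - alpha) Hcont) as [q Hq]; [lra|].
    exists q. split; [exact Hq|].
    assert (Hq0 : 0 <= q).
    { apply Rnot_lt_le. intro Hq0. rewrite (Hneg q Hq0) in Hq. lra. }
    apply Rnot_lt_le. intro Hlt. pose proof (Hinc _ _ Hq0 Hlt). lra.
Qed.

End Cdf.

Lemma lub_downward_closure {X : Type} (A : R -> Prop) (P : X -> Prop)
    (g : X -> R) (b : R) :
  (forall a, A a <-> 0 < a < 1 /\ exists x, P x /\ a <= g x) ->
  (forall x, P x -> 0 < g x <= 1) ->
  is_lub (fun v => exists x, P x /\ v = g x) b -> is_lub A b.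
Proof.
  intros HA Hrange Hb. split.
  - intros a Ha. apply HA in Ha as [_ [x [Hx Hax]]].
    assert (g x <= b) by (apply Hb; now exists x). lra.
  - intros u Hu. destruct (Rle_dec b u) as [Hle|Hgt]; [exact Hle|]. exfalso.
    destruct (lub_approx _ b (b - u) Hb) as [v [[x [Hx ->]] Hux]]; [lra|].
    pose proof (Hrange x Hx).
    set (a := (Rmax u 0 + g x) / 2).
    assert (Hmax : Rmax u 0 < g x) by (unfold Rmax; destruct (Rle_dec u 0); lra).
    pose proof (Rmax_l u 0). pose proof (Rmax_r u 0).
    assert (Ha : A a).
    { apply HA. split; [unfold a; lra|]. exists x. split; [exact Hx|].
      unfold a; lra. }
    pose proof (Hu a Ha). unfold a in *. lra.
Qed.

Lemma Tstat_inf {k : nat} (Theta0 : set_Rk k) (l : Rk k -> R)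
    (thetahat : Rk k) (S : R) :
  is_lub (fun v => exists theta, Theta0 theta /\ v = l theta) S ->
  (forall theta, Theta0 theta -> 2 * (l thetahat - S) <= Tstat l thetahat theta)
  /\ (forall eps, 0 < eps -> exists theta,
        Theta0 theta /\ Tstat l thetahat theta < 2 * (l thetahat - S) + eps).
Proof.
  intros HS. unfold Tstat. split.
  - intros theta Htheta.
    assert (l theta <= S) by (apply HS; now exists theta). lra.
  - intros eps Heps.
    destruct (lub_approx _ S (eps / 4) HS) as [v [[theta [Htheta ->]] Hv]];
      [lra|].
    exists theta. split; [exact Htheta|lra].
Qed.

Theorem lemma3p2 (k : nat) (Theta : set_Rk k) (l : Rk k -> R)
  (thetahat : Rk k) (F : R -> R) (Theta0 : set_Rk k)
  (* thetahat is the maximum likelihood estimator over Theta *)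
  (Hmle_in : Theta thetahat)
  (Hmle : forall theta, Theta theta -> l theta <= l thetahat)
  (* (C1) interior point *)
  (Hint : interior_point Theta thetahat)
  (* (C2) strict concavity *)
  (Hconc : strictly_concave_on Theta l)
  (* Theta0 nonempty subset of Theta *)
  (Hsub : forall theta, Theta0 theta -> Theta theta)
  (Hne : exists theta, Theta0 theta)
  (* F: cdf of a nonnegative r.v., continuous, strictly increasing *)
  (HF : is_cdf_nonneg F)
  (HFcont : continuity F)
  (HFinc : strictly_increasing_on_support F) :
  svalue F Theta l thetahat Theta0
    = Rsup (fun v => exists theta, Theta0 theta /\ v = 1 - F (Tstat l thetahat theta))
  /\ Rsup (fun v => exists theta, Theta0 theta /\ v = 1 - F (Tstat l thetahat theta))
    = 1 - F (Tstat_set l thetahat Theta0).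
Proof.
  destruct (completeness (fun v => exists theta, Theta0 theta /\ v = l theta))
    as [S HS].
  { exists (l thetahat). intros v [theta [Htheta ->]]. auto. }
  { destruct Hne as [theta Htheta]. now exists (l theta), theta. }
  unfold Tstat_set. rewrite (Rsup_eq _ S HS).
  destruct (Tstat_inf Theta0 l thetahat S HS) as [Hlow Happrox].
  pose proof (sup_antitone_image F HF Theta0 _ _ Hlow Happrox) as HB.
  (* Each 1 - F(T_theta) lies in (0, 1], since T_theta >= 0. *)
  assert (Hrange : forall theta, Theta0 theta ->
            0 < 1 - F (Tstat l thetahat theta) <= 1).
  { intros theta Htheta. apply (cdf_tail_range F HF _ HFinc).
    unfold Tstat. pose proof (Hmle theta (Hsub theta Htheta)). lra. }
  pose proof (lub_downward_closure _ Theta0 _ _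
    (svalue_set_iff F HF Theta Theta0 l thetahat HFcont HFinc Hsub) Hrange HB)
    as HA.
  split; [|exact (Rsup_eq _ _ HB)].
  rewrite (Rsup_eq _ _ HB).
  (* The s-value set has supremum 1 - F T0 > 0, so the max with 0 is inert. *)
  destruct Hne as [theta0 Htheta0].
  assert (Hpos : 0 < 1 - F (2 * (l thetahat - S))).
  { pose proof (Hrange theta0 Htheta0).
    pose proof (proj1 HB _ (ex_intro _ theta0 (conj Htheta0 eq_refl))). lra. }
  unfold svalue.
  destruct (excluded_middle_informative _) as [_|Hempty].
  - rewrite (Rsup_eq _ _ HA). apply Rmax_right. lra.
  - exfalso. apply Hempty.
    destruct (lub_approx _ _ (1 - F (2 * (l thetahat - S))) HA Hpos)
      as [a [Ha _]].
    now exists a.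
Qed.
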